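(* Let $H_0,H_1$ be complex Hilbert spaces, $G$ a densely defined closed operator from $H_0$ into $H_1$ and $D$ a densely defined closed operator from $H_1$ into $H_0$ with $-G^*\subset D$. Let $H$ be a Hilbert space and $\kappa\in\mathcal L(\mathrm{BD}(G),H)$ injective with dense range. Let $a\in\mathcal L(H_1)$ and $m\in\mathcal L(H_0)$ be coercive. Define $\mathfrak b\colon\mathrm{dom}(G)\times\mathrm{dom}(G)\to\mathbb C$ by $\mathfrak b(u,v)=(aGu,Gv)_{H_1}+(mu,v)_{H_0}$ and $j\colon\mathrm{dom}(G)\to H$ by $j=\kappa\circ\pi_{\mathrm{BD}(G)}$. Then $\mathfrak b$ is coercive and continuous on $\mathrm{dom}(G)$, and the Dirichlet-to-Neumann operator $\Lambda_H$ in $H$ associated with $-DaG+m$ equals the operator associated with $(\mathfrak b,j)$.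
   Context: $\mathring D=-G^*$, $\mathring G=-D^*$. Domains carry graph inner products. $\mathrm{BD}(G)$ (resp. $\mathrm{BD}(D)$) is the orthogonal complement of $\mathrm{dom}(\mathring G)$ in $\mathrm{dom}(G)$ (resp. of $\mathrm{dom}(\mathring D)$ in $\mathrm{dom}(D)$) with induced inner products; $\pi_{\mathrm{BD}(G)},\pi_{\mathrm{BD}(D)}$ are the orthogonal projections. $G$ maps $\mathrm{BD}(G)$ into $\mathrm{BD}(D)$. Coercive operator: $\mathrm{Re}(Mx,x)\ge\mu\|x\|^2$ for some $\mu>0$; a form $\mathfrak b$ on a Hilbert space $V$ is coercive if $\mathrm{Re}\,\mathfrak b(v,v)\ge\mu\|v\|_V^2$ for some $\mu>0$. For coercive $a,m$ and $u_0\in\mathrm{BD}(G)$ there is a unique $u\in\mathrm{dom}(G)$ with $aGu\in\mathrm{dom}(D)$, $mu-DaGu=0$, $u-u_0\in\mathrm{dom}(\mathring G)$; set $\Lambda u_0=\pi_{\mathrm{BD}(D)}(aGu)$. $\Lambda_H$: $\varphi\in\mathrm{dom}(\Lambda_H)$, $\Lambda_H\varphi=\psi$ iff there exists $u_0\in\mathrm{BD}(G)$ with $\kappa(u_0)=\varphi$ and $\Lambda u_0=G\kappa^*\psi$ ($\kappa^*\colon H\to\mathrm{BD}(G)$ the adjoint). The operator $A$ associated with $(\mathfrak b,j)$: for $x,f\in H$, $x\in\mathrm{dom}(A)$ and $Ax=f$ iff there exists $u\in\mathrm{dom}(G)$ with $j(u)=x$ and $\mathfrak b(u,v)=(f,j(v))_H$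 for all $v\in\mathrm{dom}(G)$. *)

From mathcomp Require Import all_boot all_algebra.
From mathcomp Require Import reals.
From mathcomp.real_closed Require Import complex.
From Stdlib Require Import ClassicalEpsilon.
Set Implicit Arguments. Unset Strict Implicit. Unset Printing Implicit Defensive.
Import GRing.Theory Num.Theory.
Local Open Scope ring_scope.

Section Hilbert.
Variable R : realType.
Notation C := (R[i]).

Record hilbert (V : lmodType C) := Hilbert {
  ip : V -> V -> C;
  ip_linl : forall (c : C) x y z, ip (c *: x + y) z = c * ip x z + ip y z;
  ip_sym : forall x y, ip y x = (ip x y)^*;
  ip_pos : forall x, x != 0 -> 0 < ip x x;
  ip_complete : forall u : nat -> V,
    (forall e : C, 0 < e -> exists N, forall n k, (N <= n)%N -> (N <= k)%N ->
        sqrtC (ip (u n - u k) (u n - u k)) < e) ->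
    exists l, forall e : C, 0 < e -> exists N, forall n, (N <= n)%N ->
        sqrtC (ip (u n - l) (u n - l)) < e }.

Definition hnorm (V : lmodType C) (h : hilbert V) (x : V) : C :=
  sqrtC (ip h x x).

Definition hconv (V : lmodType C) (h : hilbert V) (u : nat -> V) (l : V) :=
  forall e : C, 0 < e -> exists N, forall n, (N <= n)%N -> hnorm h (u n - l) < e.

Definition subspace (V : lmodType C) (P : V -> Prop) :=
  P 0 /\ forall (c : C) x y, P x -> P y -> P (c *: x + y).

Definition linear_on (V W : lmodType C) (P : V -> Prop) (f : V -> W) :=
  forall (c : C) x y, P x -> P y -> f (c *: x + y) = c *: f x + f y.

Definition dense (V : lmodType C) (h : hilbert V) (P : V -> Prop) :=
  forall x (e : C), 0 < e -> exists y, P y /\ hnorm h (x - y) < e.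

Definition densely_defined (V W : lmodType C) (hV : hilbert V)
    (dom : V -> Prop) (f : V -> W) :=
  subspace dom /\ linear_on dom f /\ dense hV dom.

Definition closed_op (V W : lmodType C) (hV : hilbert V) (hW : hilbert W)
    (dom : V -> Prop) (f : V -> W) :=
  forall (u : nat -> V) x y, (forall n, dom (u n)) ->
    hconv hV u x -> hconv hW (fun n => f (u n)) y -> dom x /\ f x = y.

Definition adj_graph (V W : lmodType C) (hV : hilbert V) (hW : hilbert W)
    (dom : V -> Prop) (f : V -> W) (y : W) (z : V) :=
  forall x, dom x -> ip hW (f x) y = ip hV x z.

Definition adj_dom (V W : lmodType C) (hV : hilbert V) (hW : hilbert W)
    (dom : V -> Prop) (f : V -> W) (y : W) :=
  exists z, adj_graph hV hW dom f y z.

Definition minus_adj_sub (V W : lmodType C) (hV : hilbert V) (hW : hilbert W)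
    (domG : V -> Prop) (G : V -> W) (domD : W -> Prop) (D : W -> V) :=
  forall y z, adj_graph hV hW domG G y z -> domD y /\ D y = - z.

Definition graph_ip (V W : lmodType C) (hV : hilbert V) (hW : hilbert W)
    (f : V -> W) (x y : V) : C :=
  ip hV x y + ip hW (f x) (f y).

Definition graph_norm (V W : lmodType C) (hV : hilbert V) (hW : hilbert W)
    (f : V -> W) (x : V) : C :=
  sqrtC (graph_ip hV hW f x x).

(* BD(f) : orthogonal complement of dom(fcirc) in dom(f) (graph inner product);
   here dom(fcirc) is passed as a predicate *)
Definition BD (V W : lmodType C) (hV : hilbert V) (hW : hilbert W)
    (dom : V -> Prop) (f : V -> W) (domcirc : V -> Prop) (u : V) :=
  dom u /\ forall w, domcirc w -> graph_ip hV hW f u w = 0.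

Definition is_BDproj (V W : lmodType C) (hV : hilbert V) (hW : hilbert W)
    (dom : V -> Prop) (f : V -> W) (domcirc : V -> Prop) (u p : V) :=
  BD hV hW dom f domcirc p /\
  forall b, BD hV hW dom f domcirc b -> graph_ip hV hW f (u - p) b = 0.

Definition BDproj (V W : lmodType C) (hV : hilbert V) (hW : hilbert W)
    (dom : V -> Prop) (f : V -> W) (domcirc : V -> Prop) (u : V) : V :=
  epsilon (inhabits 0) (is_BDproj hV hW dom f domcirc u).

Definition bounded_op (V W : lmodType C) (hV : hilbert V) (hW : hilbert W)
    (f : V -> W) :=
  exists c : C, forall x, hnorm hW (f x) <= c * hnorm hV x.

Definition coercive_op (V : lmodType C) (hV : hilbert V) (f : V -> V) :=
  exists mu : C, 0 < mu /\ forall x, mu * hnorm hV x ^+ 2 <= 'Re (ip hV (f x) x).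


Definition coercive_form (V W : lmodType C) (hV : hilbert V) (hW : hilbert W)
    (dom : V -> Prop) (f : V -> W) (b : V -> V -> C) :=
  exists mu : C, 0 < mu /\
    forall v, dom v -> mu * graph_norm hV hW f v ^+ 2 <= 'Re (b v v).

Definition continuous_form (V W : lmodType C) (hV : hilbert V) (hW : hilbert W)
    (dom : V -> Prop) (f : V -> W) (b : V -> V -> C) :=
  exists c : C, forall u v, dom u -> dom v ->
    `|b u v| <= c * graph_norm hV hW f u * graph_norm hV hW f v.

(* operator A in H associated with (b, j) on dom(G): A x = y *)
Definition assoc_op (V K : lmodType C) (hK : hilbert K) (dom : V -> Prop)
    (b : V -> V -> C) (j : V -> K) (x y : K) :=
  exists u, dom u /\ j u = x /\ forall v, dom v -> b u v = ip hK y (j v).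

End Hilbert.

Section DtN.
Variable R : realType.
Notation C := (R[i]).
Variables (H0 H1 H : lmodType C) (h0 : hilbert H0) (h1 : hilbert H1)
  (hH : hilbert H) (domG : H0 -> Prop) (G : H0 -> H1)
  (domD : H1 -> Prop) (D : H1 -> H0).

(* dom(Gcirc) = dom(-D^* ) = dom(D^* ),  dom(Dcirc) = dom(-G^* ) = dom(G^* ) *)
Definition domGcirc : H0 -> Prop := adj_dom h1 h0 domD D.
Definition domDcirc : H1 -> Prop := adj_dom h0 h1 domG G.
Definition BDG : H0 -> Prop := BD h0 h1 domG G domGcirc.
Definition BDD : H1 -> Prop := BD h1 h0 domD D domDcirc.
Definition piBDG : H0 -> H0 := BDproj h0 h1 domG G domGcirc.
Definition piBDD : H1 -> H1 := BDproj h1 h0 domD D domDcirc.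

Definition kappa_star (kappa : H0 -> H) (psi : H) : H0 :=
  epsilon (inhabits 0) (fun w => BDG w /\
    forall u, BDG u -> ip hH (kappa u) psi = graph_ip h0 h1 G u w).

(* Lambda u0 = g  (Lambda : BD(G) -> BD(D)) *)
Definition Lambda_rel (a : H1 -> H1) (m : H0 -> H0) (u0 : H0) (g : H1) :=
  exists u, domG u /\ domD (a (G u)) /\ m u - D (a (G u)) = 0 /\
    domGcirc (u - u0) /\ piBDD (a (G u)) = g.

Definition DtN_H (kappa : H0 -> H) (a : H1 -> H1) (m : H0 -> H0) (phi psi : H) :=
  exists u0, BDG u0 /\ kappa u0 = phi /\
    Lambda_rel a m u0 (G (kappa_star kappa psi)).

Definition form_b (a : H1 -> H1) (m : H0 -> H0) (u v : H0) : C :=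
  ip h1 (a (G u)) (G v) + ip h0 (m u) v.

Definition map_j (kappa : H0 -> H) (u : H0) : H := kappa (piBDG u).

End DtN.

(* The form part is Cauchy-Schwarz in the graph norm of G.  For the operator
   part the key fact is an abstract Green formula: for w in dom D and v in dom G,
     (w, G v) + (D w, v) = (pi_BD(D) w, G pi_BD(G) v)   (graph inner product of D),
   which follows from the orthogonal decomposition dom G = dom G° (+) BD(G) and
   the fact that G maps BD(G) isometrically onto BD(D), with inverse D.  Since
   kappa^* is characterised by (psi, kappa pi_BD(G) v)_H = (G kappa^* psi, G pi_BD(G) v)
   in the same graph inner product, the variational equation b(u, v) = (psi, j v)
   for all v in dom G says exactly that pi_BD(D) (a G u) = G kappa^* psi, once
   m u = D a G u has been read off from the test functions in dom G°, on which j
   vanishes.  The projections and kappa^* all come from the Riesz representation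
   theorem for a semi-inner product on a complete subspace, proved by minimising
   the energy |x|^2 / 2 - Re l(x). *)

From mathcomp Require Import all_boot all_order all_algebra.
From mathcomp Require Import classical_sets reals.
From mathcomp.real_closed Require Import complex.
From Stdlib Require Import ClassicalEpsilon.
From mathcomp Require Import ring lra.
Set Implicit Arguments. Unset Strict Implicit. Unset Printing Implicit Defensive.
Import Order.TTheory GRing.Theory Num.Theory.
Local Open Scope ring_scope.

Section ComplexFacts.
Variable R : realType.
Local Notation C := R[i].
Local Notation cRe := (@complex.Re R).
Local Notation cIm := (@complex.Im R).

Lemma complex_ext (x y : C) : cRe x = cRe y -> cIm x = cIm y -> x = y.
Proof. by case: x => a b; case: y => c d /= -> ->. Qed.

Lemma cReD (x y : C) : cRe (x + y) = cRe x + cRe y. Proof. by case: x; case: y. Qed.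
Lemma cImD (x y : C) : cIm (x + y) = cIm x + cIm y. Proof. by case: x; case: y. Qed.
Lemma cReJ (z : C) : cRe z^* = cRe z. Proof. by case: z. Qed.

Lemma cReMR (s : R) (z : C) : cRe (s%:C%C * z) = s * cRe z.
Proof. by case: z => a b /=; rewrite mul0r subr0. Qed.

Lemma cRe_i (z : C) : cRe ('i%C * z) = - cIm z.
Proof. by case: z => a b /=; rewrite mul0r mul1r sub0r. Qed.

Lemma i_mulJ : 'i%C * ('i%C)^* = 1 :> C.
Proof. by apply/eqP; rewrite eq_complex /= !mul0r !mul1r sub0r opprK add0r !eqxx. Qed.

Lemma mulcJ (z : C) : z * z^* = (cRe z ^+ 2 + cIm z ^+ 2)%:C%C.
Proof.
by case: z => x y; apply/eqP; rewrite eq_complex /=; apply/andP; split; apply/eqP; ring.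
Qed.

Lemma ge0_cRe (z : C) : 0 <= z -> z = (cRe z)%:C%C /\ 0 <= cRe z.
Proof. by case: z => a b; rewrite lecE /= => /andP[/eqP -> ha]. Qed.

Lemma gt0_cRe (z : C) : 0 < z -> z = (cRe z)%:C%C /\ 0 < cRe z.
Proof. by case: z => a b; rewrite ltcE /= => /andP[/eqP -> ha]. Qed.

Lemma conjC_of_real (s : R) : (s%:C%C)^* = s%:C%C :> C.
Proof. exact: conjc_real. Qed.

Lemma sqrtC_of_real (r : R) : 0 <= r -> sqrtC r%:C%C = (Num.sqrt r)%:C%C.
Proof.
move=> r0; rewrite -{1}(sqr_sqrtr r0) rmorphXn /= sqrCK //.
by rewrite lecR sqrtr_ge0.
Qed.

Lemma sqrtC_lt (q e : C) : 0 <= q -> 0 < e -> (sqrtC q < e) = (cRe q < cRe e ^+ 2).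
Proof.
move=> /ge0_cRe[qE q0] /gt0_cRe[eE e0]; rewrite {1}qE {1}eE sqrtC_of_real // ltcR.
by rewrite -{1}(gtr0_norm e0) -sqrtr_sqr ltr_sqrt ?exprn_gt0.
Qed.

Lemma sqrtC_le_mul (p q c : C) : 0 <= p -> 0 <= q ->
  sqrtC p <= c * sqrtC q -> cRe p <= cRe c ^+ 2 * cRe q.
Proof.
move=> /ge0_cRe[pE p0] /ge0_cRe[qE q0]; rewrite {1}pE {1}qE !sqrtC_of_real //.
rewrite lecE mulrC cReMR => /andP[_ /=]; rewrite mulrC => le_pq.
rewrite -(sqr_sqrtr p0) -(sqr_sqrtr q0) -exprMn ler_pXn2r ?nnegrE ?sqrtr_ge0 //.
exact: le_trans (sqrtr_ge0 _) le_pq.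
Qed.

End ComplexFacts.

Section RealFacts.
Variable R : realType.

Lemma sqr_small_eq0 (a : R) : (forall e, 0 < e -> a ^+ 2 < e) -> a = 0.
Proof.
move=> small; apply/eqP; rewrite -sqrf_eq0 eq_le sqr_ge0 andbT.
by apply/ler_addgt0Pr => e e0; rewrite add0r ltW // small.
Qed.

Lemma sqr_le_bounds (a b : R) : 0 <= b -> a ^+ 2 <= b ^+ 2 -> - b <= a <= b.
Proof.
move=> b0 le_ab; rewrite -ler_norml -(ger0_norm b0) -ler_sqr ?nnegrE ?normr_ge0 //.
by rewrite -!normrX !ger0_norm ?sqr_ge0.
Qed.

Lemma sqr_lt_bounds (a b : R) : 0 <= b -> a ^+ 2 < b ^+ 2 -> - b < a < b.
Proof.
move=> b0 lt_ab; rewrite -ltr_norml -(ger0_norm b0) -ltr_sqr ?nnegrE ?normr_ge0 //.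
by rewrite -!normrX !ger0_norm ?sqr_ge0.
Qed.

Lemma quadratic_ge0_discr (a b c : R) : 0 <= a -> 0 <= c ->
  (forall s, 0 <= a + 2 * s * b + s ^+ 2 * c) -> b ^+ 2 <= a * c.
Proof.
move=> a0 c0 ge0; have [c_eq0 | c_neq0] := eqVneq c 0.
  subst c; have [-> | b_neq0] := eqVneq b 0; first by nra.
  have := ge0 (- (a + 1) / (2 * b)).
  have -> : a + 2 * (- (a + 1) / (2 * b)) * b + (- (a + 1) / (2 * b)) ^+ 2 * 0 = -1.
    by field; rewrite b_neq0.
  lra.
have c_gt0 : 0 < c by rewrite lt_def c_neq0.
have := ge0 (- b / c).
have -> : a + 2 * (- b / c) * b + (- b / c) ^+ 2 * c = (a * c - b ^+ 2) / c.
  by field.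
by rewrite pmulr_lge0 ?invr_gt0 // subr_ge0.
Qed.

Lemma quadratic_ge0_lin_eq0 (a b : R) : 0 <= b ->
  (forall s, 0 <= s * a + s ^+ 2 * b) -> a = 0.
Proof.
move=> b0 ge0; have : (a / 2) ^+ 2 <= 0 * b.
  by apply: quadratic_ge0_discr => // s; have := ge0 s; lra.
by rewrite mul0r => le0; apply: sqr_small_eq0 => e e0; lra.
Qed.

Definition inv_succ (n : nat) : R := n.+1%:R^-1.

Lemma inv_succ_gt0 n : 0 < inv_succ n.
Proof. by rewrite invr_gt0. Qed.

Lemma inv_succ_small (e : R) : 0 < e ->
  exists N, forall n, (N <= n)%N -> inv_succ n < e.
Proof.
move=> e0; exists (Num.truncn e^-1) => n le_Nn.
rewrite -(invrK e) ltf_pV2 ?posrE ?invr_gt0 ?ltr0Sn //.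
by apply: lt_le_trans (truncnS_gt _) _; rewrite ler_nat ltnS.
Qed.

End RealFacts.

(** * Semi-inner products and the Riesz representation theorem *)

Section SemiInnerDefs.
Variables (R : realType) (V : lmodType R[i]).
Local Notation C := R[i].

Definition sqnorm (f : V -> V -> C) (x : V) : R := complex.Re (f x x).

Definition semi_inner (S : V -> Prop) (f : V -> V -> C) :=
  [/\ subspace S,
      forall (c : C) x y z, S x -> S y -> f (c *: x + y) z = c * f x z + f y z,
      forall x y, f y x = (f x y)^* &
      forall x, 0 <= f x x].

Definition cauchy_seq (f : V -> V -> C) (u : nat -> V) :=
  forall e : R, 0 < e -> exists N, forall n k, (N <= n)%N -> (N <= k)%N ->
    sqnorm f (u n - u k) < e.

Definition converges_to (f : V -> V -> C) (u : nat -> V) (l : V) :=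
  forall e : R, 0 < e -> exists N, forall n, (N <= n)%N -> sqnorm f (u n - l) < e.

Definition complete_in (f : V -> V -> C) (S : V -> Prop) :=
  forall u : nat -> V, (forall n, S (u n)) -> cauchy_seq f u ->
    exists2 l, S l & converges_to f u l.

Definition lin_functional (S : V -> Prop) (l : V -> C) :=
  forall (c : C) x y, S x -> S y -> l (c *: x + y) = c * l x + l y.

(* Only the real part is bounded; the imaginary part follows by linearity,
   see [bounded_functional_Im]. *)
Definition bounded_functional (S : V -> Prop) (f : V -> V -> C) (l : V -> C) :=
  exists2 K : R, 0 <= K & forall x, S x -> complex.Re (l x) ^+ 2 <= K * sqnorm f x.

End SemiInnerDefs.

Section Subspace.
Variables (R : realType) (V : lmodType R[i]) (S : V -> Prop).
Hypothesis S_sub : subspace S.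

Lemma subspace0 : S 0. Proof. by case: S_sub. Qed.
Lemma subspaceZD (c : R[i]) x y : S x -> S y -> S (c *: x + y).
Proof. by case: S_sub => _; apply. Qed.
Lemma subspaceD x y : S x -> S y -> S (x + y).
Proof. by move=> Sx Sy; have := subspaceZD 1 Sx Sy; rewrite scale1r. Qed.
Lemma subspaceZ (c : R[i]) x : S x -> S (c *: x).
Proof. by move=> Sx; have := subspaceZD c Sx subspace0; rewrite addr0. Qed.
Lemma subspaceB x y : S x -> S y -> S (x - y).
Proof. by move=> Sx Sy; rewrite -scaleN1r addrC; apply: subspaceZD. Qed.

Lemma lin_functional0 (l : V -> R[i]) : lin_functional S l -> l 0 = 0.
Proof.
move=> l_lin; have := l_lin 1 _ _ subspace0 subspace0; rewrite scaler0 add0r mul1r => E.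
by apply: (addrI (l 0)); rewrite addr0 -E.
Qed.
Lemma lin_functionalZ (l : V -> R[i]) (c : R[i]) x : lin_functional S l -> S x ->
  l (c *: x) = c * l x.
Proof.
by move=> l_lin Sx; have := l_lin c _ _ Sx subspace0; rewrite addr0 lin_functional0 ?addr0.
Qed.
Lemma lin_functionalB (l : V -> R[i]) x y : lin_functional S l -> S x -> S y ->
  l (x - y) = l x - l y.
Proof.
by move=> l_lin Sx Sy; rewrite -scaleN1r addrC l_lin // mulN1r addrC.
Qed.

End Subspace.

Section SemiInnerTheory.
Variables (R : realType) (V : lmodType R[i]) (S : V -> Prop) (f : V -> V -> R[i]).
Hypothesis fS : semi_inner S f.
Local Notation C := R[i].
Local Notation cRe := (@complex.Re R).
Local Notation cIm := (@complex.Im R).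
Local Notation nf := (sqnorm f).

Let S_sub : subspace S. Proof. by case: fS. Qed.
Let f_linl : forall (c : C) x y z, S x -> S y -> f (c *: x + y) z = c * f x z + f y z.
Proof. by case: fS. Qed.
Lemma sip_sym x y : f y x = (f x y)^*. Proof. by case: fS. Qed.
Lemma sip_ge0 x : 0 <= f x x. Proof. by case: fS. Qed.

Lemma sip_linl z : lin_functional S (f^~ z).
Proof. by move=> c x y; apply: f_linl. Qed.

Lemma sip0l z : f 0 z = 0.
Proof. exact: (lin_functional0 S_sub (sip_linl z)). Qed.
Lemma sip0r z : f z 0 = 0.
Proof. by rewrite sip_sym sip0l conjC0. Qed.
Lemma sipZl (c : C) x z : S x -> f (c *: x) z = c * f x z.
Proof. exact: (lin_functionalZ S_sub c (sip_linl z)). Qed.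
Lemma sipBl x y z : S x -> S y -> f (x - y) z = f x z - f y z.
Proof. by move=> Sx Sy; rewrite (lin_functionalB (sip_linl z) Sx Sy). Qed.
Lemma sipDr x y z : S x -> S y -> f z (x + y) = f z x + f z y.
Proof.
move=> Sx Sy; rewrite !(sip_sym _ z) -rmorphD.
by rewrite -[x]scale1r f_linl // mul1r scale1r.
Qed.
Lemma sipZr (c : C) x z : S x -> f z (c *: x) = c^* * f z x.
Proof. by move=> Sx; rewrite sip_sym (sip_sym x z) sipZl // rmorphM. Qed.
Lemma sipBr x y z : S x -> S y -> f z (x - y) = f z x - f z y.
Proof. by move=> Sx Sy; rewrite sip_sym (sip_sym x z) (sip_sym y z) sipBl // rmorphB. Qed.

Lemma sqnorm_ge0 x : 0 <= nf x.
Proof. by have [] := ge0_cRe (sip_ge0 x). Qed.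
Lemma sip_diag x : f x x = (nf x)%:C%C.
Proof. by have [] := ge0_cRe (sip_ge0 x). Qed.
Lemma cRe_sip_sym x y : cRe (f y x) = cRe (f x y).
Proof. by rewrite sip_sym cReJ. Qed.

Lemma sqnorm_expand (s : R) y w : S y -> S w ->
  nf (s%:C%C *: y + w) = nf w + 2 * s * cRe (f y w) + s ^+ 2 * nf y.
Proof.
move=> Sy Sw; have Ssy := subspaceZ S_sub s%:C%C Sy.
rewrite /sqnorm f_linl // !sipDr // !sipZr //.
rewrite conjC_of_real (sip_sym y w) !(cReD, cReMR, cReJ); ring.
Qed.

Lemma sqnormZR (s : R) y : S y -> nf (s%:C%C *: y) = s ^+ 2 * nf y.
Proof.
move=> Sy; have := sqnorm_expand s Sy (subspace0 S_sub).
by rewrite addr0 sip0r /sqnorm sip0l /= mulr0 !add0r.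
Qed.

Lemma sqnormB_sym x y : S x -> S y -> nf (x - y) = nf (y - x).
Proof.
move=> Sx Sy; have -> : y - x = (-1)%:C%C *: (x - y).
  by rewrite rmorphN rmorph1 scaleN1r opprB.
by rewrite sqnormZR; [ring | exact: subspaceB].
Qed.

Lemma sip_CauchySchwarz_Re x y : S x -> S y -> cRe (f x y) ^+ 2 <= nf x * nf y.
Proof.
move=> Sx Sy; apply: quadratic_ge0_discr; rewrite ?sqnorm_ge0 // => s.
by rewrite -cRe_sip_sym -sqnorm_expand // sqnorm_ge0.
Qed.

Lemma sip_CauchySchwarz x y : S x -> S y -> cRe (f x y) ^+ 2 + cIm (f x y) ^+ 2 <= nf x * nf y.
Proof.
move=> Sx Sy; set z := f x y; set N := _ + _.
have Szx := subspaceZ S_sub z^* Sx.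
have := sip_CauchySchwarz_Re Szx Sy; rewrite sipZl // -/z mulrC mulcJ /= -/N.
rewrite /sqnorm sipZl // sipZr // conjCK mulrA [z^* * z]mulrC mulcJ sip_diag /= -/N.
rewrite mulr0 subr0 => le_N; have N0 : 0 <= N by rewrite addr_ge0 ?sqr_ge0.
clearbody N; have [-> | N_neq0] := eqVneq N 0; first by rewrite mulr_ge0 ?sqnorm_ge0.
have N_gt0 : 0 < N by rewrite lt_def N_neq0.
by rewrite -(ler_pM2l N_gt0) mulrA -expr2.
Qed.

Lemma sqrtC_sqr_sip x : sqrtC (f x x) ^+ 2 = (nf x)%:C%C.
Proof. by rewrite sqrtCK sip_diag. Qed.

Lemma sqnorm_parallelogram x y : S x -> S y ->
  nf (x + y) + nf (x - y) = 2 * nf x + 2 * nf y.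
Proof.
move=> Sx Sy.
have -> : x + y = 1%:C%C *: y + x by rewrite scale1r addrC.
have -> : x - y = (-1)%:C%C *: y + x by rewrite rmorphN rmorph1 scaleN1r addrC.
by rewrite !sqnorm_expand //; ring.
Qed.

End SemiInnerTheory.

Section Riesz.
Variables (R : realType) (V : lmodType R[i]) (S : V -> Prop) (f : V -> V -> R[i]).
Hypothesis fS : semi_inner S f.
Hypothesis S_complete : complete_in f S.
Variable l : V -> R[i].
Hypothesis l_lin : lin_functional S l.
Hypothesis l_bounded : bounded_functional S f l.
Local Notation cRe := (@complex.Re R).
Local Notation nf := (sqnorm f).

Let S_sub : subspace S. Proof. by case: fS. Qed.

(* Dirichlet principle: a minimiser [w] of the energy represents [l]. *)
Let energy x := nf x / 2 - cRe (l x).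

Let energy_expand (s : R) y w : S y -> S w ->
  energy (s%:C%C *: y + w) = energy w + s * (cRe (f y w) - cRe (l y)) + s ^+ 2 / 2 * nf y.
Proof.
by move=> Sy Sw; rewrite /energy (sqnorm_expand fS) // l_lin // cReD cReMR; field.
Qed.

Let energy_lb : exists K, forall x, S x -> - K / 2 <= energy x.
Proof.
have [K K_ge0 lK] := l_bounded; exists K => x Sx.
have := lK x Sx; have := sqnorm_ge0 fS x; rewrite /energy.
move: (nf x) (cRe (l x)) => q r q0 le_rq.
suff : r <= (q + K) / 2 by lra.
have le_sqr : r ^+ 2 <= ((q + K) / 2) ^+ 2 by have := sqr_ge0 (q - K); nra.
have qK0 : 0 <= (q + K) / 2 by rewrite divr_ge0 ?addr_ge0.
by case/andP: (sqr_le_bounds qK0 le_sqr).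
Qed.

Let energy_parallelogram x y : S x -> S y ->
  nf (x - y) = 4 * (energy x + energy y - 2 * energy ((2^-1)%:C%C *: (x + y))).
Proof.
move=> Sx Sy; have Sxy := subspaceD S_sub Sx Sy.
have := l_lin 1 Sx Sy; rewrite scale1r mul1r => l_add.
rewrite /energy (sqnormZR fS) // (lin_functionalZ S_sub _ l_lin Sxy) cReMR l_add cReD.
have := sqnorm_parallelogram fS Sx Sy; rewrite expr2; lra.
Qed.

Let energy_lt_near w : S w -> forall e, 0 < e ->
  exists2 eta, 0 < eta & forall x, S x -> nf (w - x) < eta -> energy w < energy x + e.
Proof.
move=> Sw e e0; have [K K_ge0 lK] := l_bounded; have nfw0 := sqnorm_ge0 fS w.
pose eta := (e / 2) ^+ 2 / (nf w + K + 1).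
have eta0 : 0 < eta by rewrite divr_gt0 ?exprn_gt0 ?divr_gt0 //; lra.
exists eta => // x Sx small; set h := w - x.
have Sh : S h by apply: subspaceB.
have -> : x = (-1)%:C%C *: h + w by rewrite rmorphN rmorph1 scaleN1r opprB subrK.
rewrite energy_expand //.
have [h0 eta_h] : 0 <= nf h /\ nf h * (nf w + K + 1) < (e / 2) ^+ 2.
  by split; [exact: sqnorm_ge0 fS h | rewrite -ltr_pdivlMr; [exact: small | lra]].
have := sip_CauchySchwarz_Re fS Sh Sw; have := lK h Sh.
move: (cRe (f h w)) (cRe (l h)) => a b le_b le_a.
have e20 : 0 <= e / 2 by lra.
have /(sqr_lt_bounds e20) /andP[_ lt_a] : a ^+ 2 < (e / 2) ^+ 2 by nra.
have /(sqr_lt_bounds e20) /andP[lt_b _] : b ^+ 2 < (e / 2) ^+ 2 by nra.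
lra.
Qed.

Let energy_inf : exists d, (forall x, S x -> d <= energy x) /\
  forall e, 0 < e -> exists2 x, S x & energy x < d + e.
Proof.
pose E := (energy @` S)%classic.
have E_inf : has_inf E.
  split; first by exists (energy 0), 0 => //; exact: subspace0.
  by have [K K_lb] := energy_lb; exists (- K / 2) => _ [x Sx <-]; apply: K_lb.
exists (inf E); split=> [x Sx | e e0]; first by apply: (ge_inf E_inf.2); exists x.
by have [_ [x Sx <-] lt_x] := inf_adherent e0 E_inf; exists x.
Qed.

Let energy_minimizer : exists2 w, S w & forall x, S x -> energy w <= energy x.
Proof.
have [d [d_le d_approx]] := energy_inf.
have /boolp.choice[u u_min] : forall n, exists x, S x /\ energy x < d + inv_succ R n.
  by move=> n; have [x Sx lt_x] := d_approx _ (inv_succ_gt0 R n); exists x.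
have Su n : S (u n) by case: (u_min n).
have u_cauchy : cauchy_seq f u.
  move=> e e0; have e8 : 0 < e / 8 by lra.
  have [N N_small] := inv_succ_small e8.
  exists N => n k le_Nn le_Nk.
  have Sm := subspaceZ S_sub (2^-1)%:C%C (subspaceD S_sub (Su n) (Su k)).
  have := d_le _ Sm; have [_ En] := u_min n; have [_ Ek] := u_min k.
  have := N_small n le_Nn; have := N_small k le_Nk.
  by rewrite energy_parallelogram //; lra.
have [w Sw u_to_w] := S_complete Su u_cauchy.
exists w => // x Sx; apply: le_trans (d_le _ Sx); apply/ler_addgt0Pr => e e0.
have e2 : 0 < e / 2 by lra.
have [eta eta0 near_w] := energy_lt_near Sw e2.
have [N1 N1_near] := u_to_w _ eta0; have [N2 N2_small] := inv_succ_small e2.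
pose n := maxn N1 N2; have [_ En] := u_min n.
have := near_w _ (Su n); rewrite (sqnormB_sym fS) // N1_near ?leq_maxl // => /(_ isT).
have := N2_small n (leq_maxr _ _); lra.
Qed.

Theorem riesz_representation : exists2 w, S w & forall x, S x -> l x = f x w.
Proof.
have [w Sw w_min] := energy_minimizer.
have Re_eq y : S y -> cRe (l y) = cRe (f y w).
  move=> Sy; apply/eqP; rewrite eq_sym -subr_eq0; apply/eqP.
  apply: (@quadratic_ge0_lin_eq0 _ _ (nf y / 2)).
    by rewrite divr_ge0 ?(sqnorm_ge0 fS).
  by move=> s; have := w_min _ (subspaceZD S_sub s%:C%C Sy Sw); rewrite energy_expand //; lra.
exists w => // x Sx; apply: complex_ext; first exact: Re_eq.
have Six := subspaceZ S_sub 'i%C Sx.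
have := Re_eq _ Six; rewrite (lin_functionalZ S_sub _ l_lin Sx) (sipZl fS _ w Sx) !cRe_i.
by move/eqP; rewrite eqr_opp => /eqP.
Qed.

End Riesz.

Section Kernels.
Variables (R : realType) (V : lmodType R[i]) (S : V -> Prop) (f : V -> V -> R[i]).
Hypothesis fS : semi_inner S f.
Local Notation cRe := (@complex.Re R).
Local Notation cIm := (@complex.Im R).
Local Notation nf := (sqnorm f).

Let S_sub : subspace S. Proof. by case: fS. Qed.

Lemma semi_inner_sub (P : V -> Prop) : subspace P -> (forall x, P x -> S x) ->
  semi_inner P f.
Proof. by case: fS => _ f_linl f_sym f_ge0 P_sub PS; split=> // c x y z /PS + /PS; apply: f_linl. Qed.

Lemma bounded_functional_Im (l : V -> R[i]) K : lin_functional S l ->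
  (forall x, S x -> cRe (l x) ^+ 2 <= K * nf x) -> forall x, S x -> cIm (l x) ^+ 2 <= K * nf x.
Proof.
move=> l_lin lK x Sx; have := lK _ (subspaceZ S_sub 'i%C Sx).
rewrite (lin_functionalZ S_sub _ l_lin Sx) cRe_i sqrrN /sqnorm.
by rewrite (sipZl fS _ _ Sx) (sipZr fS _ _ Sx) mulrA i_mulJ mul1r.
Qed.

Lemma lin_functional_lim_eq0 (l : V -> R[i]) (u : nat -> V) x :
  lin_functional S l -> bounded_functional S f l ->
  (forall n, S (u n)) -> S x -> converges_to f u x ->
  (forall n, l (u n) = 0) -> l x = 0.
Proof.
move=> l_lin [K K0 lK] Su Sx u_to_x lu0.
have small e : 0 < e -> exists n, K * nf (x - u n) < e.
  move=> e0; have K1 : 0 < K + 1 by lra.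
  have [N N_near] := u_to_x (e / (K + 1)) (divr_gt0 e0 K1).
  exists N; rewrite (sqnormB_sym fS) // mulrC.
  apply: le_lt_trans (_ : e / (K + 1) * K < e).
    by apply: ler_wpM2r => //; apply/ltW/N_near.
  by rewrite mulrAC ltr_pdivrMr ?ltr_pM2l //; lra.
have lx n : l x = l (x - u n) by rewrite (lin_functionalB l_lin Sx (Su n)) lu0 subr0.
have Sxu n : S (x - u n) := subspaceB S_sub Sx (Su n).
apply: complex_ext; apply: sqr_small_eq0 => e /small[n lt_n]; rewrite (lx n) /=.
  exact: le_lt_trans (lK _ (Sxu n)) lt_n.
exact: le_lt_trans (bounded_functional_Im l_lin lK (Sxu n)) lt_n.
Qed.

Lemma complete_kernel (W : Type) (Q : W -> Prop) (ls : W -> V -> R[i]) :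
  complete_in f S ->
  (forall w, Q w -> lin_functional S (ls w)) ->
  (forall w, Q w -> bounded_functional S f (ls w)) ->
  complete_in f (fun x => S x /\ forall w, Q w -> ls w x = 0).
Proof.
move=> S_complete ls_lin ls_bd u u_ker u_cauchy.
have [x Sx u_to_x] := S_complete _ (fun n => (u_ker n).1) u_cauchy.
exists x => //; split=> // w Qw.
apply: (lin_functional_lim_eq0 (ls_lin w Qw) (ls_bd w Qw) _ Sx u_to_x).
  by move=> n; case: (u_ker n).
by move=> n; case: (u_ker n) => _; apply.
Qed.

Lemma sip_bounded z : S z -> bounded_functional S f (f^~ z).
Proof.
by move=> Sz; exists (nf z) => [|x Sx]; rewrite ?(sqnorm_ge0 fS) // mulrC (sip_CauchySchwarz_Re fS).
Qed.

Lemma orthogonal_projection (P : V -> Prop) : subspace P -> (forall x, P x -> S x) ->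
  complete_in f P -> forall v, S v -> exists2 p, P p & forall x, P x -> f (v - p) x = 0.
Proof.
move=> P_sub PS P_complete v Sv.
have fP := semi_inner_sub P_sub PS.
have [K K0 lK] := sip_bounded Sv.
have v_bd : bounded_functional P f (f^~ v) by exists K => // x /PS; apply: lK.
have [p Pp p_repr] := riesz_representation fP P_complete (sip_linl fP v) v_bd.
exists p => // x Px.
by rewrite (sipBl fS x Sv (PS _ Pp)) !(sip_sym fS x) p_repr // subrr.
Qed.

End Kernels.

(** * Hilbert spaces and closed operators *)

Section HilbertFacts.
Variables (R : realType) (V : lmodType R[i]) (h : hilbert V).
Local Notation C := R[i].
Local Notation cRe := (@complex.Re R).
Local Notation nf := (sqnorm (ip h)).

Lemma hilbert_semi_inner : semi_inner (fun _ => True) (ip h).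
Proof.
split=> [|c x y z _ _|x y|x]; [by [] | exact: ip_linl | exact: ip_sym |].
have [->|x_neq0] := eqVneq x 0; last exact: ltW (ip_pos h x_neq0).
have := ip_linl h 1 0 0 0; rewrite scaler0 add0r mul1r => E.
by have -> : ip h 0 0 = 0 by apply: (addrI (ip h 0 0)); rewrite addr0 -E.
Qed.

Lemma ip_ge0 x : 0 <= ip h x x.
Proof. by case: hilbert_semi_inner. Qed.

Lemma ip_eq0 x : ip h x x = 0 -> x = 0.
Proof. by apply: contra_eq => /(ip_pos h) /lt0r_neq0. Qed.

Lemma ip0l z : ip h 0 z = 0. Proof. exact: sip0l hilbert_semi_inner z. Qed.
Lemma ip0r z : ip h z 0 = 0. Proof. exact: sip0r hilbert_semi_inner z. Qed.
Lemma ipBl x y z : ip h (x - y) z = ip h x z - ip h y z.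
Proof. by rewrite (sipBl hilbert_semi_inner). Qed.
Lemma ipNl x z : ip h (- x) z = - ip h x z.
Proof. by rewrite -[- x]add0r ipBl ip0l add0r. Qed.
Lemma ipNr x z : ip h z (- x) = - ip h z x.
Proof. by rewrite -[- x]add0r (sipBr hilbert_semi_inner) // ip0r add0r. Qed.
Lemma ipBr x y z : ip h z (x - y) = ip h z x - ip h z y.
Proof. by rewrite (sipBr hilbert_semi_inner). Qed.
Lemma ipDr x y z : ip h z (x + y) = ip h z x + ip h z y.
Proof. by rewrite (sipDr hilbert_semi_inner). Qed.
Lemma ip_sqnorm_ge0 x : 0 <= nf x.
Proof. exact: sqnorm_ge0 hilbert_semi_inner x. Qed.

Lemma hnorm_lt x (e : C) : 0 < e -> (hnorm h x < e) = (nf x < cRe e ^+ 2).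
Proof. by move=> e0; rewrite /hnorm sqrtC_lt ?ip_ge0. Qed.

Lemma converges_to_hconv u l : converges_to (ip h) u l -> hconv h u l.
Proof.
move=> u_to_l e /[dup] e0 /gt0_cRe[_ e0'].
have [N N_near] := u_to_l _ (exprn_gt0 2 e0'); exists N => n le_Nn.
by rewrite hnorm_lt // N_near.
Qed.

Lemma hconv_converges_to u l : hconv h u l -> converges_to (ip h) u l.
Proof.
move=> u_to_l e e0; have sqrt_e0 : 0 < (Num.sqrt e)%:C%C :> C by rewrite ltcR sqrtr_gt0.
have [N N_near] := u_to_l _ sqrt_e0; exists N => n le_Nn.
by have := N_near n le_Nn; rewrite hnorm_lt //= sqr_sqrtr // ltW.
Qed.

Lemma hilbert_complete : complete_in (ip h) (fun _ => True).
Proof.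
move=> u _ u_cauchy.
have u_cauchyC : forall e : C, 0 < e -> exists N, forall n k, (N <= n)%N -> (N <= k)%N ->
    sqrtC (ip h (u n - u k) (u n - u k)) < e.
  move=> e /[dup] e0 /gt0_cRe[_ e0'].
  have [N N_near] := u_cauchy _ (exprn_gt0 2 e0'); exists N => n k le_Nn le_Nk.
  by have := hnorm_lt (u n - u k) e0; rewrite /hnorm => ->; apply: N_near.
have [l u_to_l] := ip_complete u_cauchyC.
by exists l => //; apply: hconv_converges_to.
Qed.

End HilbertFacts.

Section BoundedCoercive.
Variables (R : realType) (V W : lmodType R[i]) (hV : hilbert V) (hW : hilbert W).
Local Notation cRe := (@complex.Re R).

Lemma bounded_op_sqnorm (f : V -> W) : bounded_op hV hW f ->
  exists2 K : R, 0 <= K & forall x, sqnorm (ip hW) (f x) <= K * sqnorm (ip hV) x.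
Proof.
case=> c f_le; exists (cRe c ^+ 2) => [|x]; first exact: sqr_ge0.
exact: sqrtC_le_mul (ip_ge0 hW _) (ip_ge0 hV _) (f_le x).
Qed.

Lemma coercive_op_sqnorm (f : V -> V) : coercive_op hV f ->
  exists2 mu : R, 0 < mu & forall x, mu * sqnorm (ip hV) x <= cRe (ip hV (f x) x).
Proof.
case=> mu [/gt0_cRe[muE mu0] f_ge]; exists (cRe mu) => // x; have := f_ge x.
by rewrite /hnorm (sqrtC_sqr_sip (hilbert_semi_inner hV)) -complexRe {1}muE -rmorphM lecR.
Qed.

End BoundedCoercive.

Section ClosedOperator.
Variables (R : realType) (V W : lmodType R[i]) (hV : hilbert V) (hW : hilbert W).
Variables (dom : V -> Prop) (T : V -> W).
Hypothesis dom_sub : subspace dom.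
Hypothesis T_lin : linear_on dom T.
Local Notation cRe := (@complex.Re R).
Local Notation gip := (graph_ip hV hW T).

Lemma linear_on0 : T 0 = 0.
Proof.
have := T_lin 1 (subspace0 dom_sub) (subspace0 dom_sub); rewrite scaler0 add0r scale1r => E.
by apply: (addrI (T 0)); rewrite addr0 -E.
Qed.
Lemma linear_onD x y : dom x -> dom y -> T (x + y) = T x + T y.
Proof. by move=> Dx Dy; have := T_lin 1 Dx Dy; rewrite !scale1r. Qed.
Lemma linear_onB x y : dom x -> dom y -> T (x - y) = T x - T y.
Proof.
move=> Dx Dy; have := T_lin (-1) Dy Dx; rewrite !scaleN1r addrC => ->.
by rewrite addrC.
Qed.

Lemma graph_semi_inner : semi_inner dom gip.
Proof.
split=> // [c x y z Dx Dy|x y|x]; rewrite /graph_ip.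
- by rewrite T_lin // !ip_linl; ring.
- by rewrite (ip_sym hV x) (ip_sym hW (T x)) rmorphD.
- by rewrite addr_ge0 ?ip_ge0.
Qed.

Lemma sqnorm_graph x : sqnorm gip x = sqnorm (ip hV) x + sqnorm (ip hW) (T x).
Proof. by rewrite /sqnorm /graph_ip cReD. Qed.

Lemma graph_ip_eq0 x : gip x x = 0 -> x = 0.
Proof.
by rewrite /graph_ip => /eqP; rewrite paddr_eq0 ?ip_ge0 // => /andP[/eqP /ip_eq0].
Qed.

Lemma graph_functional_lin y z : lin_functional dom (fun x => ip hV x y + ip hW (T x) z).
Proof. by move=> c x x' Dx Dx'; rewrite T_lin // !ip_linl; ring. Qed.

Lemma graph_functional_bounded y z :
  bounded_functional dom gip (fun x => ip hV x y + ip hW (T x) z).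
Proof.
have ny := ip_sqnorm_ge0 hV y; have nz := ip_sqnorm_ge0 hW z.
exists (2 * (sqnorm (ip hV) y + sqnorm (ip hW) z)) => [|x Dx]; first lra.
rewrite cReD sqnorm_graph.
have := sip_CauchySchwarz_Re (hilbert_semi_inner hV) (x := x) (y := y) I I.
have := sip_CauchySchwarz_Re (hilbert_semi_inner hW) (x := T x) (y := z) I I.
have := ip_sqnorm_ge0 hV x; have := ip_sqnorm_ge0 hW (T x).
move: (cRe (ip hV x y)) (cRe (ip hW (T x) z)) => r s nx nTx le_s le_r.
have := sqr_ge0 (r - s); nra.
Qed.

Hypothesis T_closed : closed_op hV hW dom T.

Lemma dom_complete : complete_in gip dom.
Proof.
move=> u Du u_cauchy.
have split_cauchy : cauchy_seq (ip hV) u /\ cauchy_seq (ip hW) (T \o u).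
  split=> e /u_cauchy[N N_near]; exists N => n k le_Nn le_Nk;
  have := N_near n k le_Nn le_Nk; rewrite sqnorm_graph ?linear_onB //=;
  have := ip_sqnorm_ge0 hV (u n - u k); have := ip_sqnorm_ge0 hW (T (u n) - T (u k)); lra.
have [x _ u_to_x] := hilbert_complete (fun _ => I) split_cauchy.1.
have [y _ Tu_to_y] := hilbert_complete (fun _ => I) split_cauchy.2.
have [Dx Tx] := T_closed Du (converges_to_hconv u_to_x) (converges_to_hconv Tu_to_y).
exists x => // e e0; have e20 : 0 < e / 2 by lra.
have [N1 N1_near] := u_to_x _ e20; have [N2 N2_near] := Tu_to_y _ e20.
exists (maxn N1 N2) => n; rewrite geq_max => /andP[le_N1n le_N2n].
rewrite sqnorm_graph linear_onB // Tx.
by have := N1_near n le_N1n; have := N2_near n le_N2n; rewrite /=; lra.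
Qed.

(* T^** is contained in T: Riesz in the graph norm gives [p] with
   [(z - T p, p - y)] in the graph of T^*, and the hypothesis forces it to vanish. *)
Lemma closed_op_biadjoint y z :
  (forall a b, adj_graph hV hW dom T a b -> ip hV b y = ip hW a z) -> dom y /\ T y = z.
Proof.
move=> yz_orth.
have [p Dp p_repr] := riesz_representation graph_semi_inner dom_complete
  (graph_functional_lin y z) (graph_functional_bounded y z).
pose a := z - T p; pose b := p - y.
have ab_adj : adj_graph hV hW dom T a b.
  move=> x Dx; have := p_repr x Dx; rewrite /graph_ip /a /b !ipBr => E.
  by rewrite -[ip hW (T x) z](addKr (ip hV x y)) E; ring.
have := yz_orth a b ab_adj; have := ab_adj p Dp => ETp Eyz.
have : ip hV b b + ip hW a a = 0.
  rewrite {2}/b {2}/a !ipBr Eyz (ip_sym hV p) (ip_sym hW (T p)) -ETp; ring.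
move=> /eqP; rewrite paddr_eq0 ?ip_ge0 // => /andP[/eqP /ip_eq0 b0 /eqP /ip_eq0 a0].
by move: a0 b0; rewrite /a /b => /subr0_eq -> /subr0_eq <-.
Qed.

Variable circ : V -> Prop.
Hypothesis circ_dom : forall w, circ w -> dom w.
Local Notation BDs := (BD hV hW dom T circ).
Local Notation piBD := (BDproj hV hW dom T circ).

Lemma BD_subspace : subspace BDs.
Proof.
split=> [|c x y [Dx x_orth] [Dy y_orth]].
  by split=> [|w _]; [exact: subspace0 | exact: sip0l graph_semi_inner w].
split=> [|w Cw]; first exact: subspaceZD.
by rewrite (sip_linl graph_semi_inner) // x_orth // y_orth // mulr0 addr0.
Qed.

Lemma BD_complete : complete_in gip BDs.
Proof.
apply: (complete_kernel graph_semi_inner dom_complete) => w Cw.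
  exact: sip_linl graph_semi_inner w.
exact: sip_bounded graph_semi_inner _ (circ_dom Cw).
Qed.

Lemma BDproj_spec u : dom u -> is_BDproj hV hW dom T circ u (piBD u).
Proof.
move=> Du; apply: epsilon_spec.
have [p BDp p_orth] := orthogonal_projection graph_semi_inner BD_subspace
  (fun x (BDx : BDs x) => BDx.1) BD_complete Du.
by exists p.
Qed.

Lemma BDproj_unique u p : dom u -> is_BDproj hV hW dom T circ u p -> piBD u = p.
Proof.
move=> Du [BDp p_orth]; have [BDq q_orth] := BDproj_spec Du.
set q := piBD u in BDq q_orth *.
have BDqp : BDs (q - p) by rewrite -scaleN1r addrC; apply: (subspaceZD BD_subspace).
have Dp := BDp.1; have Dq := BDq.1.
apply/eqP; rewrite -subr_eq0; apply/eqP/graph_ip_eq0.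
have E : q - p = (u - p) - (u - q) by rewrite opprB [RHS]addrC addrA addrNK.
have Dup := subspaceB dom_sub Du Dp; have Duq := subspaceB dom_sub Du Dq.
by rewrite {1}E (sipBl graph_semi_inner _ Dup Duq) p_orth // q_orth // subrr.
Qed.

Lemma BDproj_BD b : BDs b -> piBD b = b.
Proof.
move=> BDb; apply: BDproj_unique; first exact: BDb.1.
by split=> // b' _; rewrite subrr (sip0l graph_semi_inner).
Qed.

Lemma BDproj_circ x : circ x -> piBD x = 0.
Proof.
move=> Cx; apply: BDproj_unique; first exact: circ_dom.
split=> [|b [_ b_orth]]; first exact: subspace0 BD_subspace.
by rewrite subr0 (sip_sym graph_semi_inner) b_orth // conjC0.
Qed.

Lemma BDproj_decomp v p : dom v -> circ p -> BDs (v - p) -> piBD v = v - p.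
Proof.
move=> Dv Cp BDvp; apply: BDproj_unique => //; split=> // b [_ b_orth].
by rewrite opprB addrC subrK (sip_sym graph_semi_inner) b_orth // conjC0.
Qed.

End ClosedOperator.

(** * Boundary data spaces of a pair of closed operators *)

Section DualPair.
Variables (R : realType) (V W : lmodType R[i]) (hV : hilbert V) (hW : hilbert W).
Variables (domT : V -> Prop) (T : V -> W) (domS : W -> Prop) (S : W -> V).
Hypotheses (domT_sub : subspace domT) (T_lin : linear_on domT T).
Hypothesis T_closed : closed_op hV hW domT T.
Hypotheses (domS_sub : subspace domS) (S_lin : linear_on domS S).
Hypothesis S_closed : closed_op hW hV domS S.
Hypothesis T_adj : minus_adj_sub hV hW domT T domS S.
Local Notation gipT := (graph_ip hV hW T).
Local Notation gipS := (graph_ip hW hV S).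
Local Notation circT := (adj_dom hW hV domS S).
Local Notation circS := (adj_dom hV hW domT T).
Local Notation BDT := (BD hV hW domT T circT).
Local Notation BDS := (BD hW hV domS S circS).
Local Notation piT := (BDproj hV hW domT T circT).
Local Notation piS := (BDproj hW hV domS S circS).

(* In the paper's notation [circT] is dom(T°) = dom(S^* ) and [circS] is
   dom(S°) = dom(T^* ). *)

Lemma minus_adj_sub_sym : minus_adj_sub hW hV domS S domT T.
Proof.
move=> x z xz_adj; apply: (closed_op_biadjoint domT_sub T_lin T_closed) => a b ab_adj.
have [Da Sa] := T_adj ab_adj.
by rewrite ipNr -(xz_adj a Da) Sa ipNl opprK.
Qed.

Let S_adj := minus_adj_sub_sym.
Let gT_semi_inner := graph_semi_inner hV hW domT_sub T_lin.
Let gT_functional_lin := graph_functional_lin hV hW T_lin.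
Let gT_functional_bounded := graph_functional_bounded hV hW domT T.

Lemma circT_dom x : circT x -> domT x.
Proof. by case=> z /S_adj[]. Qed.

Lemma circS_dom y : circS y -> domS y.
Proof. by case=> z /T_adj[]. Qed.

Lemma circT_kernelP x :
  circT x <-> domT x /\ forall w, domS w -> ip hV x (S w) + ip hW (T x) w = 0.
Proof.
split=> [[z xz_adj] | [Dx x_orth]].
  have [Dx Tx] := S_adj xz_adj; split=> // w Dw.
  by rewrite Tx ipNl (ip_sym hV (S w)) xz_adj // -ip_sym subrr.
exists (- T x) => w Dw.
by rewrite (ip_sym hV x) (ip_sym hW (- T x)) ipNl -(addr0_eq (x_orth w Dw)) opprK.
Qed.

Lemma circT_subspace : subspace circT.
Proof.
split=> [|c x y /circT_kernelP[Dx x_orth] /circT_kernelP[Dy y_orth]]; apply/circT_kernelP.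
  split=> [|w _]; first exact: subspace0.
  by rewrite ip0l (linear_on0 domT_sub T_lin) ip0l addr0.
split=> [|w Dw]; first exact: subspaceZD.
by rewrite (gT_functional_lin (S w) w) // x_orth // y_orth // mulr0 addr0.
Qed.

Lemma circT_complete : complete_in gipT circT.
Proof.
move=> u Cu u_cauchy.
have [x [Dx x_orth] u_to_x] := complete_kernel gT_semi_inner
  (dom_complete T_lin T_closed)
  (fun w _ => gT_functional_lin (S w) w) (fun w _ => gT_functional_bounded (S w) w)
  (fun n => (circT_kernelP (u n)).1 (Cu n)) u_cauchy.
by exists x => //; apply/circT_kernelP.
Qed.

Lemma dom_decomp v : domT v -> exists2 p, circT p & BDT (v - p).
Proof.
move=> Dv; have [p Cp p_orth] := orthogonal_projection gT_semi_inner circT_subspace circT_dom circT_complete Dv.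
exists p => //; split=> //.
by apply: (subspaceB domT_sub) => //; apply: circT_dom.
Qed.

Lemma circT_sub_BDproj v : domT v -> circT (v - piT v).
Proof.
move=> Dv; have [p Cp BDvp] := dom_decomp Dv.
by rewrite (BDproj_decomp domT_sub T_lin T_closed circT_dom Dv Cp BDvp) opprB addrC subrK.
Qed.

Lemma BD_map k : BDT k -> [/\ domS (T k), S (T k) = k & BDS (T k)].
Proof.
move=> [Dk k_orth].
have [DTk STk] : domS (T k) /\ S (T k) = k.
  apply: (closed_op_biadjoint domS_sub S_lin S_closed) => x b xb_adj.
  have [Dx Tx] := S_adj xb_adj.
  have /eqP := k_orth x (ex_intro _ b xb_adj).
  rewrite /graph_ip Tx ipNr subr_eq0 => /eqP E.
  by rewrite (ip_sym hW (T k)) -E -ip_sym.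
split=> //; split=> // y [z yz_adj]; have [Dy Sy] := T_adj yz_adj.
by rewrite /graph_ip STk Sy ipNr yz_adj // subrr.
Qed.

Lemma graph_ip_BD_map b1 b2 : BDT b1 -> BDT b2 -> gipS (T b1) (T b2) = gipT b1 b2.
Proof.
by move=> /BD_map[_ ST1 _] /BD_map[_ ST2 _]; rewrite /graph_ip ST1 ST2 addrC.
Qed.

(* On the dom(T°) component of [v] the two terms cancel by definition of S^*;
   on the BD(T) component, S (T b) = b. *)
Lemma green_formula w v : domS w -> domT v ->
  ip hW w (T v) + ip hV (S w) v = gipS (piS w) (T (piT v)).
Proof.
move=> Dw Dv; have [BDb _] := BDproj_spec domT_sub T_lin T_closed circT_dom Dv.
set b := piT v in BDb *; have [_ STb BDTb] := BD_map BDb.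
have [z pz_adj] := circT_sub_BDproj Dv; have [Dp Tp] := S_adj pz_adj.
have Tv : T v = - z + T b by rewrite -Tp -(linear_onD T_lin Dp BDb.1) subrK.
have Sv : ip hV (S w) v = ip hW w z + ip hV (S w) b.
  by rewrite -(pz_adj w Dw) -ipDr subrK.
have [[Dpw _] w_orth] := BDproj_spec domS_sub S_lin S_closed circS_dom Dw.
have := w_orth _ BDTb.
rewrite (sipBl (graph_semi_inner hW hV domS_sub S_lin) _ Dw Dpw) => /subr0_eq <-.
by rewrite Tv ipDr ipNr Sv /graph_ip STb; ring.
Qed.

End DualPair.

(** * The Dirichlet-to-Neumann operator *)

Section DirichletToNeumann.
Variables (R : realType) (H0 H1 H : lmodType R[i]).
Variables (h0 : hilbert H0) (h1 : hilbert H1) (hH : hilbert H).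
Variables (domG : H0 -> Prop) (G : H0 -> H1) (domD : H1 -> Prop) (D : H1 -> H0).
Hypotheses (domG_sub : subspace domG) (G_lin : linear_on domG G).
Hypothesis G_closed : closed_op h0 h1 domG G.
Hypotheses (domD_sub : subspace domD) (D_lin : linear_on domD D).
Hypothesis D_closed : closed_op h1 h0 domD D.
Hypothesis GD : minus_adj_sub h0 h1 domG G domD D.
Variable kappa : H0 -> H.
Hypothesis kappa_lin : linear_on (BDG h0 h1 domG G domD D) kappa.
Hypothesis kappa_bdd : exists c : R[i], forall u, BDG h0 h1 domG G domD D u ->
  hnorm hH (kappa u) <= c * graph_norm h0 h1 G u.
Variables (a : H1 -> H1) (m : H0 -> H0).
Local Notation cRe := (@complex.Re R).
Local Notation gipG := (graph_ip h0 h1 G).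
Local Notation gipD := (graph_ip h1 h0 D).
Local Notation BDGs := (BDG h0 h1 domG G domD D).
Local Notation piG := (piBDG h0 h1 domG G domD D).
Local Notation piD := (piBDD h0 h1 domG G domD D).
Local Notation ks := (kappa_star h0 h1 hH domG G domD D kappa).
Local Notation j := (map_j h0 h1 domG G domD D kappa).
Local Notation b := (form_b h0 h1 G a m).

Let DG := minus_adj_sub_sym domG_sub G_lin G_closed GD.
Let circG_dom := circT_dom domG_sub G_lin G_closed GD.
Let circD_dom := circS_dom GD.
Let G_BD_map := BD_map domG_sub G_lin G_closed domD_sub D_lin D_closed GD.
Let D_BD_map := BD_map domD_sub D_lin D_closed domG_sub G_lin G_closed DG.
Let gipG_semi_inner := graph_semi_inner h0 h1 domG_sub G_lin.
Let BDG_complete := BD_complete domG_sub G_lin G_closed circG_dom.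
Let BDG_subspace := BD_subspace h0 h1 domG_sub G_lin (domGcirc h0 h1 domD D).
Let piG_spec := BDproj_spec domG_sub G_lin G_closed circG_dom.
Let piD_spec := BDproj_spec domD_sub D_lin D_closed circD_dom.
Let piG_BD x : BDGs x -> piG x = x := BDproj_BD domG_sub G_lin G_closed circG_dom (b:=x).
Let piG_circ x : domGcirc h0 h1 domD D x -> piG x = 0 :=
  BDproj_circ domG_sub G_lin G_closed circG_dom (x:=x).

Lemma kappa_star_spec psi :
  BDGs (ks psi) /\ forall u, BDGs u -> ip hH (kappa u) psi = gipG u (ks psi).
Proof.
have [c kappa_le] := kappa_bdd.
have gBDG := semi_inner_sub gipG_semi_inner BDG_subspace (fun x (BDx : BDGs x) => BDx.1).
have l_lin : lin_functional BDGs (fun u => ip hH (kappa u) psi).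
  by move=> c' x y BDx BDy; rewrite kappa_lin // ip_linl.
have l_bd : bounded_functional BDGs gipG (fun u => ip hH (kappa u) psi).
  exists (cRe c ^+ 2 * sqnorm (ip hH) psi) => [|x BDx].
    by rewrite mulr_ge0 ?sqr_ge0 ?ip_sqnorm_ge0.
  have := sqrtC_le_mul (ip_ge0 hH _) (sip_ge0 gipG_semi_inner x) (kappa_le x BDx).
  have := sip_CauchySchwarz_Re (hilbert_semi_inner hH) (x := kappa x) (y := psi) I I.
  move=> CS le_k; apply: le_trans CS _; rewrite mulrAC.
  by apply: ler_wpM2r => //; exact: ip_sqnorm_ge0.
have [w BDw w_repr] := riesz_representation gBDG BDG_complete l_lin l_bd.
have ks_ex : exists w, BDGs w /\ forall u, BDGs u -> ip hH (kappa u) psi = gipG u w.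
  by exists w.
exact: (epsilon_spec (inhabits 0) _ ks_ex).
Qed.

Lemma ip_map_j psi v : domG v -> ip hH psi (j v) = gipD (G (ks psi)) (G (piG v)).
Proof.
move=> Dv; have [BDk k_repr] := kappa_star_spec psi; have [BDpv _] := piG_spec Dv.
rewrite /map_j ip_sym k_repr // -(sip_sym gipG_semi_inner).
by rewrite (graph_ip_BD_map domG_sub G_lin G_closed domD_sub D_lin D_closed GD).
Qed.

Lemma form_b_green u v : domG u -> domD (a (G u)) -> m u = D (a (G u)) -> domG v ->
  b u v = gipD (piD (a (G u))) (G (piG v)).
Proof.
move=> Du Dw mu Dv; rewrite /form_b mu.
exact: (green_formula domG_sub G_lin G_closed domD_sub D_lin D_closed GD Dw Dv).
Qed.

Lemma DtN_H_assoc_op phi psi :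
  DtN_H h0 h1 hH domG G domD D kappa a m phi psi -> assoc_op hH domG b j phi psi.
Proof.
case=> u0 [BDu0 [ku0 [u [Du [Dw [mu [C_uu0 piD_w]]]]]]].
have uu0 : u - (u - u0) = u0 by rewrite opprB addrC subrK.
have BD_uu0 : BDGs (u - (u - u0)) by rewrite uu0.
have piG_u : piG u = u0.
  exact: etrans (BDproj_decomp domG_sub G_lin G_closed circG_dom Du C_uu0 BD_uu0) uu0.
exists u; split=> //; split=> [|v Dv]; first by rewrite /map_j piG_u.
by rewrite ip_map_j // -piD_w form_b_green // (subr0_eq mu).
Qed.

Lemma assoc_op_DtN_H phi psi :
  assoc_op hH domG b j phi psi -> DtN_H h0 h1 hH domG G domD D kappa a m phi psi.
Proof.
case=> u [Du [ju b_repr]]; have [BDk _] := kappa_star_spec psi.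
have [Dw Dw_mu] : domD (a (G u)) /\ D (a (G u)) = m u.
  apply: (closed_op_biadjoint domD_sub D_lin D_closed) => x y xy_adj.
  have [Dx Gx] := DG xy_adj.
  have := b_repr x Dx; rewrite ip_map_j // piG_circ; last by exists y.
  rewrite (linear_on0 domG_sub G_lin) (sip0r (graph_semi_inner h1 h0 domD_sub D_lin)).
  rewrite /form_b Gx ipNr addrC => /eqP; rewrite subr_eq0 => /eqP E.
  by rewrite (ip_sym h1 (a (G u))) -E -ip_sym.
exists (piG u); split; first exact: (piG_spec Du).1.
split=> //; exists u; do 3!(split=> //); first by rewrite Dw_mu subrr.
split; first exact: (circT_sub_BDproj domG_sub G_lin G_closed GD Du).
have [BDpw _] := piD_spec Dw; have [_ _ BDGk] := G_BD_map BDk.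
have BDc := subspaceB (BD_subspace h1 h0 domD_sub D_lin (domDcirc h0 h1 domG G)) BDpw BDGk.
set c := _ - _ in BDc; have [DDc GDc BDDc] := D_BD_map BDc.
have c_orth : gipD c c = 0.
  have := b_repr _ DDc; rewrite ip_map_j // form_b_green // ?Dw_mu // piG_BD // GDc.
  move=> E; rewrite {1}/c (sipBl (graph_semi_inner h1 h0 domD_sub D_lin) c BDpw.1 BDGk.1).
  by rewrite E subrr.
by apply/eqP; rewrite -subr_eq0; apply/eqP/(graph_ip_eq0 c_orth).
Qed.

End DirichletToNeumann.

Section FormBounds.
Variables (R : realType) (H0 H1 : lmodType R[i]) (h0 : hilbert H0) (h1 : hilbert H1).
Variables (domG : H0 -> Prop) (G : H0 -> H1) (a : H1 -> H1) (m : H0 -> H0).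
Local Notation cRe := (@complex.Re R).
Local Notation cIm := (@complex.Im R).
Local Notation b := (form_b h0 h1 G a m).
Local Notation n0 := (sqnorm (ip h0)).
Local Notation n1 := (sqnorm (ip h1)).

Lemma graph_norm_sqr u : graph_norm h0 h1 G u ^+ 2 = (n0 u + n1 (G u))%:C%C.
Proof.
by rewrite /graph_norm sqrtCK /graph_ip !(sip_diag (hilbert_semi_inner _)) -rmorphD.
Qed.

Lemma form_b_coercive : coercive_op h1 a -> coercive_op h0 m ->
  coercive_form h0 h1 domG G b.
Proof.
move=> /coercive_op_sqnorm[mua mua0 a_ge] /coercive_op_sqnorm[mum mum0 m_ge].
exists (Num.min mua mum)%:C%C; split=> [|v _]; first by rewrite ltcR lt_min mua0 mum0.
rewrite graph_norm_sqr -complexRe -rmorphM lecR /form_b cReD.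
have := a_ge (G v); have := m_ge v.
have := ip_sqnorm_ge0 h0 v; have := ip_sqnorm_ge0 h1 (G v).
have := ge_min mua mua mum; have := ge_min mum mua mum; rewrite !lexx orbT /=.
move: (Num.min mua mum) => mu le_mu_m le_mu_a n1_ge0 n0_ge0; nra.
Qed.

Lemma form_b_continuous : bounded_op h1 h1 a -> bounded_op h0 h0 m ->
  continuous_form h0 h1 domG G b.
Proof.
move=> /bounded_op_sqnorm[Ka Ka0 a_le] /bounded_op_sqnorm[Km Km0 m_le].
have [K K0 b_le] : exists2 K : R, 0 <= K & forall u v,
    cRe (b u v) ^+ 2 + cIm (b u v) ^+ 2 <= K ^+ 2 * ((n0 u + n1 (G u)) * (n0 v + n1 (G v))).
  exists (2 * (Ka + Km + 1)) => [|u v]; first lra.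
  have A_le := sip_CauchySchwarz (hilbert_semi_inner h1) (x := a (G u)) (y := G v) I I.
  have M_le := sip_CauchySchwarz (hilbert_semi_inner h0) (x := m u) (y := v) I I.
  have := ler_wpM2r (ip_sqnorm_ge0 h1 (G v)) (a_le (G u)).
  have := ler_wpM2r (ip_sqnorm_ge0 h0 v) (m_le u).
  have := ip_sqnorm_ge0 h0 u; have := ip_sqnorm_ge0 h1 (G u).
  have := ip_sqnorm_ge0 h0 v; have := ip_sqnorm_ge0 h1 (G v).
  move: A_le M_le; rewrite /form_b cReD cImD.
  move: (cRe _) (cRe _) (cIm _) (cIm _) => p q r s.
  move: (n0 u) (n1 (G u)) (n0 v) (n1 (G v)) (n1 (a (G u))) (n0 (m u)).
  move=> x0 x1 y0 y1 a1 m0 A_le M_le y1_ge0 y0_ge0 x1_ge0 x0_ge0 m_le' a_le'.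
  have [W1 W0] : x1 * y1 <= (x0 + x1) * (y0 + y1) /\ x0 * y0 <= (x0 + x1) * (y0 + y1).
    by split; nra.
  have W_ge0 : 0 <= (x0 + x1) * (y0 + y1) by rewrite mulr_ge0 ?addr_ge0.
  move: ((x0 + x1) * (y0 + y1)) W1 W0 W_ge0 => W W1 W0 W_ge0.
  have := ler_wpM2l Ka0 W1; have := ler_wpM2l Km0 W0.
  have : 2 * (Ka + Km) * W <= (2 * (Ka + Km + 1)) ^+ 2 * W.
    by apply: ler_wpM2r => //; nra.
  have := sqr_ge0 (p - q); have := sqr_ge0 (r - s); nra.
exists K%:C%C => u v _ _.
rewrite normc_def /graph_norm /graph_ip !(sip_diag (hilbert_semi_inner _)) -!rmorphD.
rewrite !sqrtC_of_real ?addr_ge0 ?ip_sqnorm_ge0 // -!rmorphM lecR.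
rewrite -(ger0_norm K0) -sqrtr_sqr -!sqrtrM ?mulr_ge0 ?sqr_ge0 ?addr_ge0 ?ip_sqnorm_ge0 //.
by rewrite ler_sqrt ?mulr_ge0 ?sqr_ge0 ?addr_ge0 ?ip_sqnorm_ge0 // -mulrA b_le.
Qed.

End FormBounds.

Unset Implicit Arguments.

Theorem proposition3p6 (R : realType)
  (H0 H1 H : lmodType R[i])
  (h0 : hilbert H0) (h1 : hilbert H1) (hH : hilbert H)
  (domG : H0 -> Prop) (G : H0 -> H1) (domD : H1 -> Prop) (D : H1 -> H0)
  (G_dd : densely_defined h0 domG G) (G_closed : closed_op h0 h1 domG G)
  (D_dd : densely_defined h1 domD D) (D_closed : closed_op h1 h0 domD D)
  (GD : minus_adj_sub h0 h1 domG G domD D)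
  (kappa : H0 -> H)
  (kappa_lin : linear_on (BDG h0 h1 domG G domD D) kappa)
  (kappa_bdd : exists c : R[i], forall u, BDG h0 h1 domG G domD D u ->
      hnorm hH (kappa u) <= c * graph_norm h0 h1 G u)
  (kappa_inj : forall u v, BDG h0 h1 domG G domD D u ->
      BDG h0 h1 domG G domD D v -> kappa u = kappa v -> u = v)
  (kappa_dense : dense hH (fun phi => exists u,
      BDG h0 h1 domG G domD D u /\ kappa u = phi))
  (a : {linear H1 -> H1}) (a_bdd : bounded_op h1 h1 a) (a_coer : coercive_op h1 a)
  (m : {linear H0 -> H0}) (m_bdd : bounded_op h0 h0 m) (m_coer : coercive_op h0 m) :
  coercive_form h0 h1 domG G (form_b h0 h1 G a m) /\
  continuous_form h0 h1 domG G (form_b h0 h1 G a m) /\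
  forall phi psi : H,
    DtN_H h0 h1 hH domG G domD D kappa a m phi psi <->
    assoc_op hH domG (form_b h0 h1 G a m) (map_j h0 h1 domG G domD D kappa) phi psi.
Proof.
(* Injectivity and density of kappa make Lambda_H single-valued; the identity
   of the two relations holds without them. *)
have [domG_sub [G_lin _]] := G_dd; have [domD_sub [D_lin _]] := D_dd.
split; first exact: form_b_coercive.
split; first exact: form_b_continuous.
move=> phi psi; split.
  exact: (DtN_H_assoc_op domG_sub G_lin G_closed domD_sub D_lin D_closed GD kappa_lin kappa_bdd (a := a)).
exact: (assoc_op_DtN_H domG_sub G_lin G_closed domD_sub D_lin D_closed GD kappa_lin kappa_bdd (a := a)).
Qed.
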